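(* Let $G$ be a finitely generated torsion-free nilpotent group and suppose the decomposition $\overline{G}=R_1\times R_2$ into rational subgroups matches the decomposition $G=G_1\times G_2$. Let $X_i=R_iZ(\overline{G})\cap G$ for $i=1,2$. Then $X_i=G_iZ(G)$ for $i=1,2$.
   Context: $\overline{G}$ is the rational closure of $G$ (torsion-free nilpotent, containing $G$, uniquely divisible, each element has a positive power in $G$); for $H\le G$, $\overline{H}$ is the set of elements of $\overline{G}$ having a positive power in $H$. A subgroup is rational if closed under taking all $n$-th roots. A decomposition $\overline{G}=R_1\times R_2$ matches $G=G_1\times G_2$ if $\overline{G_i}\,Z(\overline{G})=R_i\,Z(\overline{G})$ for $i=1,2$. *)

From Stdlib Require Import List Arith.
Set Implicit Arguments.

Record group := Group {
  carrier :> Type;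
  mul : carrier -> carrier -> carrier;
  one : carrier;
  inv : carrier -> carrier;
  mulA : forall x y z, mul x (mul y z) = mul (mul x y) z;
  mul1g : forall x, mul one x = x;
  mulVg : forall x, mul (inv x) x = one
}.

Section GroupDefs.
Variable T : group.

Definition gset := T -> Prop.

Definition setT : gset := fun _ => True.
Definition set1g : gset := fun x => x = one T.

Definition set_eq (A B : gset) : Prop := forall x, A x <-> B x.
Definition subset (A B : gset) : Prop := forall x, A x -> B x.
Definition setI (A B : gset) : gset := fun x => A x /\ B x.

Fixpoint pow (x : T) (n : nat) : T :=
  match n with 0 => one T | S k => mul T x (pow x k) end.

Definition is_subgroup (H : gset) : Prop :=
  H (one T) /\ (forall x y, H x -> H y -> H (mul T x y)) /\
  (forall x, H x -> H (inv T x)).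

Definition prodset (A B : gset) : gset :=
  fun x => exists a b, A a /\ B b /\ x = mul T a b.

Definition generated (A : gset) : gset :=
  fun x => forall H, is_subgroup H -> subset A H -> H x.

Definition commg (x y : T) : T := mul T (mul T (inv T x) (inv T y)) (mul T x y).

Definition commgroup (A B : gset) : gset :=
  generated (fun z => exists a b, A a /\ B b /\ z = commg a b).

Fixpoint lcs (H : gset) (n : nat) : gset :=
  match n with 0 => H | S k => commgroup (lcs H k) H end.

Definition nilpotent (H : gset) : Prop := exists c, set_eq (lcs H c) set1g.

Definition torsion_free (H : gset) : Prop :=
  forall x n, H x -> 0 < n -> pow x n = one T -> x = one T.

Definition finitely_generated (H : gset) : Prop :=
  exists s : list T, set_eq H (generated (fun x => In x s)).

Definition center (H : gset) : gset :=
  fun z => H z /\ forall x, H x -> mul T z x = mul T x z.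

Definition is_normal (N H : gset) : Prop :=
  forall n h, N n -> H h -> N (mul T (inv T h) (mul T n h)).

Definition is_dprod (K A B : gset) : Prop :=
  is_subgroup A /\ is_subgroup B /\ subset A K /\ subset B K /\
  is_normal A K /\ is_normal B K /\
  set_eq (setI A B) set1g /\ set_eq K (prodset A B).

(* The whole group T is a rational closure of the subgroup G. *)
Definition is_rational_closure_of (G : gset) : Prop :=
  is_subgroup G /\ torsion_free setT /\ nilpotent setT /\
  (forall x n, 0 < n -> exists y, pow y n = x /\
                 forall y', pow y' n = x -> y' = y) /\
  (forall x, exists n, 0 < n /\ G (pow x n)).

Definition rclosure (H : gset) : gset :=
  fun x => exists n, 0 < n /\ H (pow x n).

Definition rational (R : gset) : Prop :=
  is_subgroup R /\ forall x n, 0 < n -> R (pow x n) -> R x.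

End GroupDefs.

(* The centre of G is central in Gbar: conjugation by z in Z(G) fixes the
   power x^n of any x in Gbar lying in G, hence fixes x by uniqueness of
   n-th roots.  Since Gbar = R1 x R2, an element lying in both R1 Z(Gbar) and
   R2 Z(Gbar) is central.  Now G1 lies in R1 Z(Gbar) by the matching
   hypothesis, so if g1 g2 (g_i in G_i) lies in R1 Z(Gbar), then g2 lies in
   R1 Z(Gbar) as well as in R2 Z(Gbar); hence g2 is central in G. *)
From Stdlib Require Import List Arith.

Section Groups.
Variable T : group.
Local Notation "x ** y" := (mul T x y) (at level 40).
Local Notation "x ^-" := (inv T x) (at level 2).
Local Notation e := (one T).
Local Notation Z := (center (setT T)).

Lemma mulgV (x : T) : x ** x ^- = e.
Proof.
  rewrite <- (mul1g T (x ** x ^-)), <- (mulVg T (x ^-)) at 1.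
  rewrite <- mulA, (mulA T x^- x x^-), mulVg, mul1g. apply mulVg.
Qed.

Lemma mulg1 (x : T) : x ** e = x.
Proof. rewrite <- (mulVg T x), mulA, mulgV. apply mul1g. Qed.

Lemma mulKg (x y : T) : x ^- ** (x ** y) = y.
Proof. rewrite mulA, mulVg. apply mul1g. Qed.

Lemma mulKVg (x y : T) : x ** (x ^- ** y) = y.
Proof. rewrite mulA, mulgV. apply mul1g. Qed.

Lemma invg_unique (a b : T) : a ** b = e -> b = a ^-.
Proof. intro Hab. rewrite <- (mulKg a b), Hab. apply mulg1. Qed.

Lemma invgK (x : T) : (x ^-) ^- = x.
Proof. symmetry. apply invg_unique. apply mulVg. Qed.

Lemma invMg (x y : T) : (x ** y) ^- = y ^- ** x ^-.
Proof.
  symmetry. apply invg_unique.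
  rewrite <- mulA, (mulA T y y^- x^-), mulgV, mul1g. apply mulgV.
Qed.

Lemma pow_conjg (z x : T) n :
  pow T (z ^- ** (x ** z)) n = z ^- ** (pow T x n ** z).
Proof.
  induction n as [|n IHn]; simpl.
  - rewrite mul1g. symmetry. apply mulVg.
  - rewrite IHn, <- !mulA, mulKVg. reflexivity.
Qed.

Lemma center_setT_subgroup : is_subgroup Z.
Proof.
  split; [|split].
  - split; [exact I|]. intros x _. rewrite mul1g, mulg1. reflexivity.
  - intros a b [_ Ha] [_ Hb]. split; [exact I|]. intros x _.
    rewrite <- mulA, (Hb x I), mulA, (Ha x I), mulA. reflexivity.
  - intros a [_ Ha]. split; [exact I|]. intros x _.
    rewrite <- (mulKg a (x ** a^-)), (mulA T a x), (Ha x I), <- (mulA T x a).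
    rewrite mulgV, mulg1. reflexivity.
Qed.

Lemma prodset_center_subgroup (R : gset T) :
  is_subgroup R -> is_subgroup (prodset R Z).
Proof.
  intros (R1 & RM & RV).
  destruct center_setT_subgroup as (Z1 & ZM & ZV).
  split; [|split].
  - exists e, e. split; [|split]; auto. symmetry. apply mulg1.
  - intros x y (r & z & Hr & Hz & ->) (r' & z' & Hr' & Hz' & ->).
    exists (r ** r'), (z ** z'). split; [|split]; auto.
    rewrite <- !mulA, (mulA T z r' z'), (proj2 Hz r' I), <- mulA. reflexivity.
  - intros x (r & z & Hr & Hz & ->).
    exists (r ^-), (z ^-). split; [|split]; auto.
    rewrite invMg. apply (proj2 (ZV z Hz) _ I).
Qed.

Lemma subset_prodset_center (A : gset T) : subset A (prodset A Z).
Proof.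
  intros a Ha. exists a, e. repeat split; auto.
  - apply center_setT_subgroup.
  - symmetry. apply mulg1.
Qed.

Lemma subset_rclosure (H : gset T) : subset H (rclosure H).
Proof. intros h Hh. exists 1. split; auto. simpl. rewrite mulg1. exact Hh. Qed.

Lemma center_sub_center_setT (G : gset T) :
  (forall x, exists n, 0 < n /\ G (pow T x n)) ->
  (forall x n, 0 < n -> exists y, pow T y n = x /\
                 forall y', pow T y' n = x -> y' = y) ->
  subset (center G) Z.
Proof.
  intros Hpow Hroot z [Gz Hz]. split; [exact I|]. intros x _.
  destruct (Hpow x) as (n & Hn & Gxn).
  destruct (Hroot (pow T x n) n Hn) as (y & _ & Huniq).
  assert (Hconj : z ^- ** (x ** z) = x).
  { assert (Hxn : pow T (z ^- ** (x ** z)) n = pow T x n).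
    { rewrite pow_conjg, <- (Hz _ Gxn). apply mulKg. }
    rewrite (Huniq _ Hxn). symmetry. apply Huniq. reflexivity. }
  rewrite <- Hconj at 1. apply mulKVg.
Qed.

Lemma dprod_commute {K A B : gset T} {a b : T} :
  is_dprod K A B -> A a -> B b -> a ** b = b ** a.
Proof.
  intros ((_ & MA & VA) & (_ & MB & VB) & SA & SB & NA & NB & AB1 & _) Ha Hb.
  assert (Hcomm : (a ^- ** b ^-) ** (a ** b) = e).
  { apply AB1. split.
    - rewrite <- mulA. apply MA; [apply VA; auto | apply NA; auto].
    - rewrite <- (mulA T a^- b^- (a ** b)), (mulA T b^- a b),
        (mulA T a^- (b^- ** a) b).
      apply MB; [apply NB; auto | auto]. }
  apply invg_unique in Hcomm. rewrite invMg, !invgK in Hcomm. exact Hcomm.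
Qed.

Lemma dprod_sym (K A B : gset T) : is_dprod K A B -> is_dprod K B A.
Proof.
  intro D. pose proof D as (HA & HB & SA & SB & NA & NB & AB1 & KAB).
  do 6 (split; [assumption|]). split; intro x; split.
  - intros [Hb Ha]. apply AB1. split; auto.
  - intro Hx. apply AB1 in Hx. destruct Hx. split; auto.
  - intro Kx. apply KAB in Kx. destruct Kx as (a & b & Ha & Hb & ->).
    exists b, a. repeat split; auto. apply (dprod_commute D); auto.
  - intros (b & a & Hb & Ha & ->). apply KAB. exists a, b. repeat split; auto.
    symmetry. apply (dprod_commute D); auto.
Qed.

Lemma dprod_setT_prodset_center_meet {R1 R2 : gset T} :
  is_dprod (setT T) R1 R2 ->
  subset (setI (prodset R1 Z) (prodset R2 Z)) Z.
Proof.
  intros DR y [(r1 & z & Hr1 & Hz & ->) (r2 & z' & Hr2 & Hz' & Hy)].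
  destruct center_setT_subgroup as (_ & ZM & ZV).
  apply ZM; auto. split; [exact I|]. intros x _.
  assert (Hw : Z (z' ** z ^-)) by auto.
  assert (Er : r1 = r2 ** (z' ** z ^-)).
  { rewrite mulA, <- Hy, <- mulA, mulgV, mulg1. reflexivity. }
  pose proof DR as (_ & _ & _ & _ & _ & _ & _ & PR).
  destruct (proj1 (PR x) I) as (a & b & Ha & Hb & ->).
  (* r1 commutes with R1 because it is r2 times a central element *)
  assert (Ca : r1 ** a = a ** r1).
  { rewrite Er, <- (mulA T r2 _ a), (proj2 Hw a I), (mulA T r2 a), (mulA T a r2).
    rewrite (dprod_commute DR Ha Hr2). reflexivity. }
  rewrite mulA, Ca, <- mulA, (dprod_commute DR Hr1 Hb), mulA. reflexivity.
Qed.

Lemma setI_prodset_center_dprod (G G1 G2 R1 R2 : gset T) :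
  is_subgroup G -> subset (center G) Z ->
  is_dprod (setT T) R1 R2 -> is_dprod G G1 G2 ->
  subset G1 (prodset R1 Z) -> subset G2 (prodset R2 Z) ->
  set_eq (setI (prodset R1 Z) G) (prodset G1 (center G)).
Proof.
  intros (_ & GM & _) ZG DR DG G1R G2R x.
  pose proof DR as (HR1 & _).
  pose proof DG as (_ & _ & SG1 & SG2 & _ & _ & _ & PG).
  pose proof (prodset_center_subgroup R1 HR1) as (_ & RZM & RZV).
  split.
  - intros [Hx Gx]. destruct (proj1 (PG x) Gx) as (g1 & g2 & H1 & H2 & ->).
    exists g1, g2. repeat split; auto.
    assert (Zg2 : Z g2).
    { apply (dprod_setT_prodset_center_meet DR). split; auto.
      rewrite <- (mulKg g1 g2). apply RZM; auto. }
    intros y _. apply (proj2 Zg2 y I).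
  - intros (g1 & z & H1 & Hz & ->). split.
    + apply RZM; auto.
      exists e, z. split; [apply HR1|split; [apply ZG, Hz|symmetry; apply mul1g]].
    + apply GM; auto. apply Hz.
Qed.

End Groups.

Theorem mainTheorem11 (Gbar : group) (G G1 G2 R1 R2 : gset Gbar) :
  is_subgroup G -> finitely_generated G -> torsion_free G -> nilpotent G ->
  is_rational_closure_of G ->
  rational R1 -> rational R2 -> is_dprod (setT Gbar) R1 R2 ->
  is_dprod G G1 G2 ->
  set_eq (prodset (rclosure G1) (center (setT Gbar)))
         (prodset R1 (center (setT Gbar))) ->
  set_eq (prodset (rclosure G2) (center (setT Gbar)))
         (prodset R2 (center (setT Gbar))) ->
  set_eq (setI (prodset R1 (center (setT Gbar))) G) (prodset G1 (center G)) /\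
  set_eq (setI (prodset R2 (center (setT Gbar))) G) (prodset G2 (center G)).
Proof.
  intros HG _ _ _ (_ & _ & _ & Hroot & Hpow) _ _ DR DG E1 E2.
  pose proof (center_sub_center_setT Gbar G Hpow Hroot) as ZG.
  assert (GiR : forall Gi Ri : gset Gbar,
    set_eq (prodset (rclosure Gi) (center (setT Gbar)))
           (prodset Ri (center (setT Gbar))) ->
    subset Gi (prodset Ri (center (setT Gbar)))).
  { intros Gi Ri Ei g Hg. apply Ei, subset_prodset_center, subset_rclosure, Hg. }
  split.
  - apply (setI_prodset_center_dprod Gbar G G1 G2 R1 R2); auto.
  - apply (setI_prodset_center_dprod Gbar G G2 G1 R2 R1); auto using dprod_sym.
Qed.
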